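(* Fix $a$ and $q$ (with $|q|<1$, or formally), and let $(\boldsymbol{\alpha}_n(a))_{n\ge0}$ be a sequence with $\boldsymbol{\alpha}_0(a)=1$ that does not depend on $k$. For each $k$ let $\boldsymbol{\beta}_n(a,k)$ be defined so that $(\boldsymbol{\alpha}_n(a),\boldsymbol{\beta}_n(a,k))$ is a WP-Bailey pair (relative to $a$, with parameter $k$), and set $\boldsymbol{\beta}_{-1}(a,k):=0$. Define $\boldsymbol{\alpha}^*_0(a)=\boldsymbol{\beta}^*_0(a,k)=1$ and, for $n\ge1$, \[ \boldsymbol{\alpha}_n^*(a) = (aq^n+q^{-n})\boldsymbol{\alpha}_n(a), \] \[ \boldsymbol{\beta}_n^*(a,k) = \frac{(1+aq^{2n})\boldsymbol{\beta}_n(a,k)-(1-k)\left(1-\frac{k}{a}\right)\boldsymbol{\beta}_{n-1}(a,kq)}{q^{n}} - a\,\frac{(k,k/a;q)_{n}}{(aq,q;q)_{n}}. \] Then $(\boldsymbol{\alpha}_n^*(a),\boldsymbol{\beta}_n^*(a,k))$ is a WP-Bailey pair (relative to $a$, with parameter $k$).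
   Context: Notation: $(x;q)_n=\prod_{i=0}^{n-1}(1-xq^i)$, $(x_1,\dots,x_j;q)_n=(x_1;q)_n\cdots(x_j;q)_n$, and similarly for $n=\infty$. A pair of sequences $(\boldsymbol{\alpha}_n(a,k,q),\boldsymbol{\beta}_n(a,k,q))_{n\ge0}$ is a WP-Bailey pair (relative to $a$, with parameter $k$) if $\boldsymbol{\alpha}_0=1$ and for all $n\ge0$ \[\boldsymbol{\beta}_n=\sum_{j=0}^n\frac{(k/a;q)_{n-j}(k;q)_{n+j}}{(q;q)_{n-j}(aq;q)_{n+j}}\boldsymbol{\alpha}_j.\] Parameters are assumed generic so that no denominator vanishes. *)

From HB Require Import structures.
From mathcomp Require Import all_boot all_order all_algebra.
Set Implicit Arguments. Unset Strict Implicit. Unset Printing Implicit Defensive.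
Import Order.TTheory GRing.Theory Num.Theory.
Local Open Scope ring_scope.

Definition qpoch (R : fieldType) (x q : R) (n : nat) : R :=
  \prod_(i < n) (1 - x * q ^+ i).

Definition WPBailey (R : fieldType) (a k q : R) (alpha beta : nat -> R) : Prop :=
  alpha 0%N = 1 /\
  forall n : nat,
    beta n = \sum_(j < n.+1)
      (qpoch (k / a) q (n - j) * qpoch k q (n + j))
      / (qpoch q q (n - j) * qpoch (a * q) q (n + j)) * alpha j.

Definition alphaStar (R : fieldType) (a q : R) (alpha : nat -> R) (n : nat) : R :=
  if n is 0%N then 1 else (a * q ^+ n + q ^- n) * alpha n.

(* beta^*_n(a,k); beta k n stands for beta_n(a,k). *)
Definition betaStar (R : fieldType) (a q : R) (beta : R -> nat -> R) (k : R)
    (n : nat) : R :=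
  if n is m.+1 then
    ((1 + a * q ^+ (2 * n)) * beta k n - (1 - k) * (1 - k / a) * beta (k * q) m)
      / q ^+ n
    - a * (qpoch k q n * qpoch (k / a) q n) / (qpoch (a * q) q n * qpoch q q n)
  else 1.

From HB Require Import structures.
From mathcomp Require Import all_boot all_order all_algebra.
From mathcomp Require Import ring zify.
Set Implicit Arguments. Unset Strict Implicit. Unset Printing Implicit Defensive.
Import GRing.Theory.
Local Open Scope ring_scope.

(* Write c_n(j; k) for the kernel of the WP-Bailey transform.  The shift
   k -> kq trades the prefactor (1 - k)(1 - k/a) for the two factors
   (1 - q^(n-j))(1 - a q^(n+j)) of c_n(j; k), so that
   (1 - k)(1 - k/a) beta_(n-1)(kq) = sum_j c_n(j; k) (1 - q^(n-j))(1 - a q^(n+j)) alpha_j.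
   Subtracting this from (1 + a q^(2n)) beta_n(k) and dividing by q^n turns
   the weight of alpha_j into a q^j + q^(-j); only the term j = 0 misses its
   correction, since alpha^*_0 = 1 instead of (a + 1) alpha_0, and that is
   the subtracted term a c_n(0; k). *)

Lemma qpoch0 (R : fieldType) (x q : R) : qpoch x q 0 = 1.
Proof. by rewrite /qpoch big_ord0. Qed.

Lemma qpochS (R : fieldType) (x q : R) n :
  qpoch x q n.+1 = qpoch x q n * (1 - x * q ^+ n).
Proof. by rewrite /qpoch big_ord_recr. Qed.

Lemma qpochSl (R : fieldType) (x q : R) n :
  qpoch x q n.+1 = (1 - x) * qpoch (x * q) q n.
Proof.
rewrite /qpoch big_ord_recl /= expr0 mulr1; congr (_ * _).
by apply: eq_bigr => i _; rewrite /bump /= add1n exprS mulrA.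
Qed.

Definition wp_kernel (R : fieldType) (a k q : R) (n j : nat) : R :=
  qpoch (k / a) q (n - j) * qpoch k q (n + j)
  / (qpoch q q (n - j) * qpoch (a * q) q (n + j)).

Lemma WPBaileyE (R : fieldType) (a k q : R) alpha beta :
  WPBailey a k q alpha beta ->
  forall n, beta n = \sum_(j < n.+1) wp_kernel a k q n j * alpha j.
Proof. by case. Qed.

Lemma wp_star_weight (R : fieldType) (a q : R) (n j : nat) :
  q != 0 -> (j <= n)%N ->
  ((1 + a * q ^+ (2 * n)) - (1 - q ^+ (n - j)) * (1 - a * q ^+ (n + j))) / q ^+ n
  = a * q ^+ j + q ^- j.
Proof.
move=> hq le_jn; rewrite -(subnK le_jn) addnK.
have -> : (2 * (n - j + j) = n - j + j + (n - j) + j)%N by lia.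
have qd_neq0 : q ^+ (n - j) != 0 by rewrite expf_neq0.
have qj_neq0 : q ^+ j != 0 by rewrite expf_neq0.
by rewrite !exprD; field; rewrite qd_neq0 qj_neq0.
Qed.

Section WPKernel.

Variables (R : fieldType) (a q : R).
Hypothesis ha : a != 0.
Hypothesis hqq : forall m : nat, qpoch q q m != 0.
Hypothesis haq : forall m : nat, qpoch (a * q) q m != 0.

Lemma wp_kernel_shift (k : R) (m j : nat) : (j <= m)%N ->
  (1 - k) * (1 - k / a) * wp_kernel a (k * q) q m j
  = wp_kernel a k q m.+1 j * ((1 - q ^+ (m.+1 - j)) * (1 - a * q ^+ (m.+1 + j))).
Proof.
move=> le_jm; rewrite /wp_kernel subSn // addSn.
have qq_neq0 := hqq (m - j).+1; have aq_neq0 := haq (m + j).+1.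
rewrite qpochS mulf_eq0 negb_or in qq_neq0.
rewrite qpochS mulf_eq0 negb_or in aq_neq0.
case/andP: qq_neq0 => qq_m_neq0 qq_last_neq0.
case/andP: aq_neq0 => aq_m_neq0 aq_last_neq0.
rewrite (qpochSl (k / a)) (qpochSl k) !qpochS [k / a * q]mulrAC.
rewrite !exprS -!mulrA in qq_last_neq0 aq_last_neq0 *.
by field; rewrite ha qq_m_neq0 aq_m_neq0 qq_last_neq0 aq_last_neq0.
Qed.

Lemma wp_shifted_beta (alpha : nat -> R) (beta : R -> nat -> R) (k : R) m :
  WPBailey a (k * q) q alpha (beta (k * q)) ->
  (1 - k) * (1 - k / a) * beta (k * q) m
  = \sum_(j < m.+2)
      wp_kernel a k q m.+1 j * ((1 - q ^+ (m.+1 - j)) * (1 - a * q ^+ (m.+1 + j)))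
      * alpha j.
Proof.
move=> /WPBaileyE ->.
(* the top term j = m + 1 vanishes through its factor 1 - q^0 *)
rewrite [RHS]big_ord_recr /= subnn expr0 subrr mul0r mulr0 mul0r addr0.
rewrite mulr_sumr; apply: eq_bigr => j _.
by rewrite mulrA wp_kernel_shift // -ltnS.
Qed.

End WPKernel.

Theorem mainTheorem1 (R : fieldType) (a q : R) (alpha : nat -> R)
    (beta : R -> nat -> R)
    (ha : a != 0) (hq : q != 0)
    (hqq : forall m : nat, qpoch q q m != 0)
    (haq : forall m : nat, qpoch (a * q) q m != 0)
    (hpair : forall k : R, WPBailey a k q alpha (beta k)) :
  forall k : R, WPBailey a k q (alphaStar a q alpha) (betaStar a q beta k).
Proof.
move=> k; split=> // [[|m]].
  by rewrite big_ord1 subn0 addn0 !qpoch0 /= !(mulr1, invr1).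
have [alpha0 _] := hpair k.
rewrite /betaStar (wp_shifted_beta ha hqq haq m (hpair (k * q))).
rewrite (WPBaileyE (hpair k)) mulr_sumr -sumrB mulr_suml.
transitivity (\sum_(j < m.+2) wp_kernel a k q m.+1 j * (a * q ^+ j + q ^- j) * alpha j
               - a * wp_kernel a k q m.+1 0).
  congr (_ - _); last first.
    rewrite /wp_kernel subn0 addn0 -mulrA.
    by rewrite (mulrC (qpoch k q _)) (mulrC (qpoch (a * q) q _)).
  apply: eq_bigr => j _.
  by rewrite -(@wp_star_weight _ a q m.+1 j hq (ltn_ord j)); ring.
rewrite big_ord_recl [RHS]big_ord_recl /= alpha0 expr0 invr1 mulr1 addrAC.
congr (_ + _); last first.
  by apply: eq_bigr => j _; rewrite /wp_kernel mulrA.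
by rewrite -[in RHS]/(wp_kernel a k q m.+1 0); ring.
Qed.
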